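(* Let $\beta>0$, $\kappa>0$, $\gamma=\beta/(\nu+2)$, $\nu\in(-1,1)$, and fix $\eta_{0,\infty}>0$ with $\frac{\beta(\nu+1)}{2(\nu+2)}<\eta_{0,\infty}^{\nu+3}<\beta$. For $s>0$ let $\eta_\infty(s)=s^{-2/(\nu+3)}\eta_{0,\infty}$ and let $(w_s,\eta_s)$ be the soliton-like traveling wave with speed $s$ and background $\eta_\infty(s)$, normalized so that $w_s(z)=s^{\frac{\nu+1}{\nu+3}}w_0(z)$, $\eta_s(z)=s^{-\frac{2}{\nu+3}}\eta_0(z)$, where $(w_0,\eta_0)$ is the soliton-like solution of $w_0-\eta_0^{-(\nu+2)}+\eta_{0,\infty}^{-(\nu+2)}=0$, $(\gamma-\kappa\partial_z^2)w_0+\eta_0-\eta_{0,\infty}=0$ with $w_0\to0$, $\eta_0\to\eta_{0,\infty}$ at $\pm\infty$. Then the momentum $I(s)=\int_{-\infty}^{\infty}w_s(z)\,[\eta_s(z)-\eta_\infty(s)]\,dz$ satisfies $$\frac{dI}{ds}=s^{-4/(\nu+3)}\,\frac{\nu-1}{\nu+3}\int_{-\infty}^{\infty}w_0(z)[\eta_0(z)-\eta_{0,\infty}]\,dz>0.$$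
   Context: A soliton-like traveling wave with speed $s$ and background $\eta_\infty>0$ is a non-constant smooth pair $(w_s,\eta_s)$ with $\eta_s>0$ satisfying $s w_s+\eta_\infty^{-(\nu+2)}-\eta_s^{-(\nu+2)}=0$, $(\gamma-\kappa\partial_z^2)w_s+s(\eta_s-\eta_\infty)=0$, $w_s\to0$, $\eta_s\to\eta_\infty$ as $|z|\to\infty$, with $\eta_s>\eta_\infty$ (homoclinic loop to the right of the saddle $(\eta_\infty,0)$ of the phase plane $(\eta_s,\eta_s')$). *)

From Stdlib Require Import Reals Lra.
Open Scope R_scope.

Definition smooth (f : R -> R) : Prop :=
  exists D : nat -> R -> R,
    D O = f /\ forall (n : nat) (x : R), derivable_pt_lim (D n) x (D (S n) x).

Definition tends_at_infty (f : R -> R) (l : R) : Prop :=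
  forall eps, 0 < eps -> exists M, forall z, M < Rabs z -> Rabs (f z - l) < eps.

Definition improper_integral_R (f : R -> R) (l : R) : Prop :=
  (forall a b, a <= b -> inhabited (Riemann_integrable f a b)) /\
  forall eps, 0 < eps -> exists M, forall a b, a <= - M -> M <= b ->
    exists pr : Riemann_integrable f a b, Rabs (RiemannInt pr - l) < eps.

(* (w0, eta0) is a soliton-like solution of the rescaled (s = 1) system
     w0 - eta0^{-(nu+2)} + eta0inf^{-(nu+2)} = 0,
     (gamma - kappa d^2/dz^2) w0 + eta0 - eta0inf = 0,
   with w0 -> 0, eta0 -> eta0inf at +-infinity, eta0 > 0, non-constant,
   and eta0 > eta0inf (homoclinic loop to the right of the saddle). *)
Definition soliton_like (nu gamma kappa eta0inf : R) (w0 eta0 : R -> R) : Prop :=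
  smooth w0 /\ smooth eta0 /\
  (forall z, 0 < eta0 z) /\
  (exists z1 z2, (w0 z1, eta0 z1) <> (w0 z2, eta0 z2)) /\
  (forall z, w0 z - Rpower (eta0 z) (-(nu + 2)) + Rpower eta0inf (-(nu + 2)) = 0) /\
  (exists w0' w0'' : R -> R,
     (forall z, derivable_pt_lim w0 z (w0' z)) /\
     (forall z, derivable_pt_lim w0' z (w0'' z)) /\
     (forall z, gamma * w0 z - kappa * w0'' z + (eta0 z - eta0inf) = 0)) /\
  tends_at_infty w0 0 /\ tends_at_infty eta0 eta0inf /\
  (forall z, eta0inf < eta0 z).

From Stdlib Require Import Reals Lra Classical FunctionalExtensionality.
From Coquelicot Require Import Coquelicot.
Open Scope R_scope.

(* The rescaling reduces everything to speed 1: the integrand at speed s is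
   s^((nu-1)/(nu+3)) times w0 (eta0 - eta0inf), so I(s) = s^((nu-1)/(nu+3)) J, which gives the
   derivative, and its sign follows from nu < 1 and J < 0.

   The real content is the convergence of J.  Since eta0 > eta0inf forces w0 < 0, the density
   w0 (eta0 - eta0inf) is negative, so partial integrals decrease as the interval grows and a
   lower bound suffices.  Near the saddle w0 ~ -(nu+2) eta0inf^-(nu+3) (eta0 - eta0inf), so the
   ODE gives w0'' <= mu w0 on both tails with mu > 0 precisely when eta0inf^(nu+3) < beta.  There
   the density dominates w0''/mu, whose integral is a difference of values of w0'; and w0' has a
   fixed sign on each tail because w0 is concave and bounded there. *)

Definition is_RInt_line (g : R -> R) (l : R) : Prop :=
  forall eps, 0 < eps -> exists M, forall a b, a <= - M -> M <= b ->
    Rabs (RInt g a b - l) < eps.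

Lemma is_RInt_line_unique (g : R -> R) (l1 l2 : R) :
  is_RInt_line g l1 -> is_RInt_line g l2 -> l1 = l2.
Proof.
  intros H1 H2. apply cond_eq. intros eps Heps.
  destruct (H1 (eps / 2)) as [M1 HM1]; [lra|].
  destruct (H2 (eps / 2)) as [M2 HM2]; [lra|].
  set (M := Rmax M1 M2).
  pose proof (Rmax_l M1 M2). pose proof (Rmax_r M1 M2).
  specialize (HM1 (- M) M ltac:(unfold M; lra) ltac:(unfold M; lra)).
  specialize (HM2 (- M) M ltac:(unfold M; lra) ltac:(unfold M; lra)).
  pose proof (Rabs_triang (RInt g (- M) M - l2) (- (RInt g (- M) M - l1))) as Htri.
  rewrite Rabs_Ropp in Htri.
  replace (RInt g (- M) M - l2 + - (RInt g (- M) M - l1)) with (l1 - l2) in Htri by ring.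
  lra.
Qed.

Lemma ex_RInt_continuity_pt (g : R -> R) (a b : R) :
  (forall x, continuity_pt g x) -> ex_RInt g a b.
Proof.
  intros Hg. apply (@ex_RInt_continuous R_CompleteNormedModule).
  intros x _. apply continuity_pt_filterlim, Hg.
Qed.

Lemma improper_integral_R_is_RInt_line (g : R -> R) (l : R) :
  improper_integral_R g l -> is_RInt_line g l.
Proof.
  intros [_ H] eps Heps. destruct (H eps Heps) as [M HM]. exists M.
  intros a b Ha Hb. destruct (HM a b Ha Hb) as [pr Hpr].
  rewrite (RInt_Reals _ _ _ pr). exact Hpr.
Qed.

Lemma RInt_const_0 (a b : R) : RInt (fun _ => 0) a b = 0.
Proof. rewrite RInt_const. exact (scal_zero_r (b - a)). Qed.

Lemma RInt_neg (g : R -> R) (a b : R) :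
  a < b -> (forall x, continuity_pt g x) -> (forall x, g x < 0) -> RInt g a b < 0.
Proof.
  intros Hab Hc Hneg. rewrite <- (RInt_const_0 a b).
  apply RInt_lt; auto using continuous_const.
  intros x _. apply continuity_pt_filterlim, Hc.
Qed.

Section LineIntegral.

Variable g : R -> R.
Hypothesis g_cont : forall x, continuity_pt g x.

Lemma is_RInt_line_improper_integral_R (l : R) :
  is_RInt_line g l -> improper_integral_R g l.
Proof.
  intros H. split.
  - intros a b Hab. constructor. exact (continuity_implies_RiemannInt Hab (fun x _ => g_cont x)).
  - intros eps Heps. destruct (H eps Heps) as [M HM]. exists (Rmax M 0).
    pose proof (Rmax_l M 0). pose proof (Rmax_r M 0).
    intros a b Ha Hb.
    assert (Hab : a <= b) by lra.
    exists (continuity_implies_RiemannInt Hab (fun x _ => g_cont x)).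
    rewrite <- RInt_Reals. apply HM; lra.
Qed.

Lemma is_RInt_line_scal (k l : R) :
  is_RInt_line g l -> is_RInt_line (fun z => k * g z) (k * l).
Proof.
  intros H eps Heps.
  assert (Hk : 0 < Rabs k + 1) by (pose proof (Rabs_pos k); lra).
  destruct (H (eps / (Rabs k + 1))) as [M HM]; [apply Rdiv_lt_0_compat; lra|].
  exists M. intros a b Ha Hb. specialize (HM a b Ha Hb).
  assert (Hscal : RInt (fun z => k * g z) a b = k * RInt g a b)
    by exact (@RInt_scal R_CompleteNormedModule g a b k (ex_RInt_continuity_pt g a b g_cont)).
  rewrite Hscal.
  replace (k * RInt g a b - k * l) with (k * (RInt g a b - l)) by ring.
  rewrite Rabs_mult.
  apply Rle_lt_trans with ((Rabs k + 1) * Rabs (RInt g a b - l)).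
  - pose proof (Rabs_pos (RInt g a b - l)). nra.
  - apply (Rmult_lt_compat_l (Rabs k + 1)) in HM; [|lra].
    replace ((Rabs k + 1) * (eps / (Rabs k + 1))) with eps in HM by (field; lra). exact HM.
Qed.

Hypothesis g_nonpos : forall x, g x <= 0.

Lemma RInt_nonpos (a b : R) : a <= b -> RInt g a b <= 0.
Proof.
  intros Hab. rewrite <- (RInt_const_0 a b).
  apply RInt_le; auto using ex_RInt_continuity_pt, ex_RInt_const.
Qed.

Lemma RInt_nonpos_antitone (a a0 b0 b : R) :
  a <= a0 -> a0 <= b0 -> b0 <= b -> RInt g a b <= RInt g a0 b0.
Proof.
  intros H1 H2 H3.
  rewrite <- (RInt_Chasles g a a0 b), <- (RInt_Chasles g a0 b0 b);
    auto using ex_RInt_continuity_pt.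
  pose proof (RInt_nonpos a a0 H1). pose proof (RInt_nonpos b0 b H3).
  change plus with Rplus. lra.
Qed.

Lemma is_RInt_line_nonpos_bounded (B : R) :
  (forall a b, a <= b -> B <= RInt g a b) ->
  exists l, is_RInt_line g l /\ forall a b, a <= b -> l <= RInt g a b.
Proof.
  intros HB.
  (* The limit is the infimum of all partial integrals. *)
  set (E := fun x => exists a b, a <= b /\ x = - RInt g a b).
  assert (HEbound : bound E).
  { exists (- B). intros x (a & b & Hab & ->). specialize (HB a b Hab). lra. }
  assert (HEinh : exists x, E x) by (exists (- RInt g 0 0), 0, 0; split; [lra | reflexivity]).
  destruct (completeness E HEbound HEinh) as [L [HLub HLleast]].
  assert (Hle : forall a b, a <= b -> - L <= RInt g a b).
  { intros a b Hab. assert (HE : E (- RInt g a b)) by (exists a, b; auto). specialize (HLub _ HE). lra. }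
  exists (- L). split; [| exact Hle].
  intros eps Heps.
  assert (Happrox : exists x, E x /\ L - eps < x).
  { apply not_all_not_ex. intros Hnot.
    assert (L <= L - eps); [| lra].
    apply HLleast. intros x Hx. apply Rnot_lt_le. intros Hlt. exact (Hnot x (conj Hx Hlt)). }
  destruct Happrox as (x & (a0 & b0 & Hab0 & ->) & Hx).
  exists (Rmax (Rabs a0) (Rabs b0)). intros a b Ha Hb.
  pose proof (Rmax_l (Rabs a0) (Rabs b0)). pose proof (Rmax_r (Rabs a0) (Rabs b0)).
  pose proof (Rle_abs b0). pose proof (Rle_abs (- a0)). rewrite Rabs_Ropp in *.
  pose proof (RInt_nonpos_antitone a a0 b0 b ltac:(lra) Hab0 ltac:(lra)).
  pose proof (Hle a b ltac:(lra)).
  apply Rabs_def1; lra.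
Qed.

Lemma RInt_nonpos_ge_of_tails (T lo hi : R) :
  (forall a, a <= - T -> lo <= RInt g a (- T)) ->
  (forall b, T <= b -> hi <= RInt g T b) ->
  forall a b, a <= b -> lo + RInt g (- T) T + hi <= RInt g a b.
Proof.
  intros Hlo Hhi a b Hab.
  pose proof (Rmin_l a (- T)). pose proof (Rmin_r a (- T)).
  pose proof (Rmax_l b T). pose proof (Rmax_r b T).
  eapply Rle_trans; [| apply (RInt_nonpos_antitone (Rmin a (- T)) a b (Rmax b T)); lra].
  rewrite <- (RInt_Chasles g (Rmin a (- T)) (- T) (Rmax b T)),
          <- (RInt_Chasles g (- T) T (Rmax b T)); auto using ex_RInt_continuity_pt.
  specialize (Hlo (Rmin a (- T)) ltac:(lra)). specialize (Hhi (Rmax b T) ltac:(lra)).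
  change plus with Rplus. lra.
Qed.

End LineIntegral.

Lemma derivable_pt_lim_reflect (u u' : R -> R) :
  (forall z, derivable_pt_lim u z (u' z)) ->
  forall z, derivable_pt_lim (fun x => u (- x)) z (- u' (- z)).
Proof.
  intros Hu z.
  replace (- u' (- z)) with (u' (- z) * -1) by ring.
  apply (derivable_pt_lim_comp Ropp u); [| apply Hu].
  apply derivable_pt_lim_opp, derivable_pt_lim_id.
Qed.

Lemma concave_bounded_below_deriv_nonneg (u u' u'' : R -> R) (M m M1 : R) :
  (forall z, derivable_pt_lim u z (u' z)) ->
  (forall z, derivable_pt_lim u' z (u'' z)) ->
  (forall z, M < z -> u'' z <= 0) ->
  (forall z, M1 < z -> m <= u z) ->
  forall b, M < b -> 0 <= u' b.
Proof.
  intros Hu Hu' Hconc Hbdd b Hb.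
  apply Rnot_lt_le. intros Hneg.
  (* Beyond [b], [u] lies below its tangent line at [b], which tends to [-oo]. *)
  set (K := (Rabs (u b - m) + 1) / (- u' b)).
  assert (HK : u' b * K = - (Rabs (u b - m) + 1)) by (unfold K; field; lra).
  assert (HK0 : 0 < K) by (apply Rdiv_lt_0_compat; pose proof (Rabs_pos (u b - m)); lra).
  pose proof (Rmax_l (b + K) (Rmax M1 b + 1)). pose proof (Rmax_r (b + K) (Rmax M1 b + 1)).
  set (t := Rmax (b + K) (Rmax M1 b + 1)) in *.
  pose proof (Rmax_l M1 b). pose proof (Rmax_r M1 b). pose proof (Rle_abs (u b - m)).
  assert (Hm : m <= u t) by (apply Hbdd; lra).
  destruct (MVT_cor2 u u' b t ltac:(lra) (fun c _ => Hu c)) as (c & Hmvt & Hc).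
  destruct (MVT_cor2 u' u'' b c ltac:(lra) (fun d _ => Hu' d)) as (d & Hmvt' & Hd).
  assert (Hu'c : u' c <= u' b) by (pose proof (Hconc d ltac:(lra)); nra).
  assert (u' c * (t - b) <= u' b * (t - b)) by (apply Rmult_le_compat_r; lra).
  assert (u' b * (t - b) <= u' b * K) by (apply Rmult_le_compat_neg_l; lra).
  lra.
Qed.

Lemma concave_bounded_below_deriv_nonpos_left (u u' u'' : R -> R) (M m M1 : R) :
  (forall z, derivable_pt_lim u z (u' z)) ->
  (forall z, derivable_pt_lim u' z (u'' z)) ->
  (forall z, z < - M -> u'' z <= 0) ->
  (forall z, z < - M1 -> m <= u z) ->
  forall a, a < - M -> u' a <= 0.
Proof.
  intros Hu Hu' Hconc Hbdd a Ha.
  assert (Hrefl : 0 <= - u' (- - a)).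
  { apply (concave_bounded_below_deriv_nonneg
             (fun x => u (- x)) (fun x => - u' (- x)) (fun x => u'' (- x)) M m M1).
    - exact (derivable_pt_lim_reflect u u' Hu).
    - intros z. replace (u'' (- z)) with (- - u'' (- z)) by ring.
      apply derivable_pt_lim_opp, (derivable_pt_lim_reflect u' u'' Hu').
    - intros z Hz. apply Hconc. lra.
    - intros z Hz. apply Hbdd. lra.
    - lra. }
  rewrite Ropp_involutive in Hrefl. lra.
Qed.

Lemma RInt_ge_of_deriv_le (u u' g : R -> R) (a b : R) :
  a <= b ->
  (forall x, derivable_pt_lim u x (u' x)) ->
  (forall x, continuity_pt u' x) -> (forall x, continuity_pt g x) ->
  (forall x, a <= x <= b -> u' x <= g x) ->
  u b - u a <= RInt g a b.
Proof.
  intros Hab Hu Hu'c Hgc Hle.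
  assert (Hftc : is_RInt u' a b (u b - u a)).
  { apply (@is_RInt_derive R_CompleteNormedModule).
    - intros x _. apply is_derive_Reals, Hu.
    - intros x _. apply continuity_pt_filterlim, Hu'c. }
  rewrite <- (is_RInt_unique _ _ _ _ Hftc).
  apply RInt_le; [exact Hab | eexists; exact Hftc | apply ex_RInt_continuity_pt, Hgc |].
  intros x Hx. apply Hle. lra.
Qed.

Lemma secant_lt_of_derive_lt (F : R -> R) (x d c : R) :
  derivable_pt_lim F x d -> d < c ->
  exists delta, 0 < delta /\ forall e, 0 < e < delta -> F (x + e) - F x < c * e.
Proof.
  intros HF Hdc.
  destruct (HF (c - d) ltac:(lra)) as [delta Hdelta].
  exists delta. split; [apply cond_pos|].
  intros e He.
  specialize (Hdelta e ltac:(lra) ltac:(rewrite Rabs_right; lra)).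
  apply Rabs_def2 in Hdelta as [Hq _].
  apply (Rmult_lt_reg_r (/ e)); [apply Rinv_0_lt_compat; lra|].
  replace (c * e * / e) with c by (field; lra).
  unfold Rdiv in Hq. lra.
Qed.

Definition momentum_density (eta0inf : R) (w eta : R -> R) (z : R) : R :=
  w z * (eta z - eta0inf).

Section SolitonTails.

Variables (nu gamma kappa eta0inf : R) (w0 w1 w2 eta0 : R -> R).

Hypothesis kappa_pos : 0 < kappa.
Hypothesis nu_gt : 0 < nu + 2.
Hypothesis eta0inf_pos : 0 < eta0inf.
Hypothesis saddle : 1 < gamma * ((nu + 2) * Rpower eta0inf (- (nu + 3))).
Hypothesis w0_eq :
  forall z, w0 z = Rpower (eta0 z) (- (nu + 2)) - Rpower eta0inf (- (nu + 2)).
Hypothesis w0_deriv : forall z, derivable_pt_lim w0 z (w1 z).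
Hypothesis w1_deriv : forall z, derivable_pt_lim w1 z (w2 z).
Hypothesis ode : forall z, kappa * w2 z = gamma * w0 z + (eta0 z - eta0inf).
Hypothesis w0_lim : tends_at_infty w0 0.
Hypothesis eta0_lim : tends_at_infty eta0 eta0inf.
Hypothesis eta0_gt : forall z, eta0inf < eta0 z.
Hypothesis eta0_cont : forall z, continuity_pt eta0 z.

Lemma w0_neg (z : R) : w0 z < 0.
Proof.
  rewrite w0_eq, !Rpower_Ropp.
  specialize (eta0_gt z).
  assert (Hlt : Rpower eta0inf (nu + 2) < Rpower (eta0 z) (nu + 2))
    by (apply Rlt_Rpower_l; lra).
  assert (/ Rpower (eta0 z) (nu + 2) < / Rpower eta0inf (nu + 2)); [| lra].
  apply Rinv_lt_contravar; [| exact Hlt].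
  apply Rmult_lt_0_compat; apply exp_pos.
Qed.

Lemma w0_cont (z : R) : continuity_pt w0 z.
Proof. apply derivable_continuous_pt. exact (exist _ (w1 z) (w0_deriv z)). Qed.

Lemma w2_cont (z : R) : continuity_pt w2 z.
Proof.
  assert (Hw2 : w2 = fun z => / kappa * (gamma * w0 z + (eta0 z - eta0inf))).
  { apply functional_extensionality. intros x. rewrite <- ode. field. lra. }
  rewrite Hw2. apply continuity_pt_scal, continuity_pt_plus.
  - apply continuity_pt_scal, w0_cont.
  - apply continuity_pt_minus; [apply eta0_cont | apply continuity_pt_const; intros ? ?; reflexivity].
Qed.

Lemma momentum_density_cont (z : R) : continuity_pt (momentum_density eta0inf w0 eta0) z.
Proof.
  unfold momentum_density.
  apply continuity_pt_mult; [apply w0_cont|].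
  apply continuity_pt_minus; [apply eta0_cont | apply continuity_pt_const; intros ? ?; reflexivity].
Qed.

Lemma momentum_density_neg (z : R) : momentum_density eta0inf w0 eta0 z < 0.
Proof. unfold momentum_density. pose proof (w0_neg z). pose proof (eta0_gt z). nra. Qed.

Lemma w0_tail_linear_bound (A' : R) :
  A' < (nu + 2) * Rpower eta0inf (- (nu + 3)) ->
  exists M, forall z, M < Rabs z ->
    w0 z < - A' * (eta0 z - eta0inf) /\ eta0 z - eta0inf < 1.
Proof.
  intros HA'.
  destruct (secant_lt_of_derive_lt (fun x => Rpower x (- (nu + 2))) eta0inf
              (- (nu + 2) * Rpower eta0inf (- (nu + 2) - 1)) (- A')
              (derivable_pt_lim_power eta0inf _ eta0inf_pos)) as (delta & Hdelta & Hsecant).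
  { replace (- (nu + 2) - 1) with (- (nu + 3)) by ring. lra. }
  destruct (eta0_lim (Rmin delta 1)) as [M HM]; [apply Rmin_pos; lra|].
  exists M. intros z Hz. specialize (HM z Hz).
  pose proof (eta0_gt z). pose proof (Rmin_l delta 1). pose proof (Rmin_r delta 1).
  rewrite Rabs_right in HM by lra.
  specialize (Hsecant (eta0 z - eta0inf) ltac:(lra)).
  replace (eta0inf + (eta0 z - eta0inf)) with (eta0 z) in Hsecant by ring.
  rewrite <- w0_eq in Hsecant. lra.
Qed.

Lemma tails_w2_le_w0_le_density :
  exists mu M, 0 < mu /\ forall z, M < Rabs z ->
    w2 z <= mu * w0 z /\ w0 z <= momentum_density eta0inf w0 eta0 z.
Proof.
  set (A := (nu + 2) * Rpower eta0inf (- (nu + 3))).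
  assert (HA : 0 < A) by (apply Rmult_lt_0_compat; [lra | apply exp_pos]).
  assert (HgammaA : 1 < gamma * A) by exact saddle.
  assert (Hgamma : 0 < gamma) by nra.
  (* Any slope [A'] strictly between [1/gamma] and [A] works. *)
  set (A' := (A + / gamma) / 2).
  assert (HgA : / gamma < A).
  { apply (Rmult_lt_reg_l gamma); [lra|]. rewrite Rinv_r; lra. }
  assert (HA'0 : 0 < A') by (pose proof (Rinv_0_lt_compat gamma Hgamma); unfold A'; lra).
  assert (HgA' : / A' < gamma).
  { apply (Rmult_lt_reg_l A'); [lra|]. rewrite Rinv_r by lra.
    unfold A'. replace ((A + / gamma) / 2 * gamma) with ((gamma * A + 1) / 2) by (field; lra).
    lra. }
  destruct (w0_tail_linear_bound A' ltac:(fold A; unfold A'; lra)) as [M HM].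
  exists ((gamma - / A') / kappa), M. split; [apply Rdiv_lt_0_compat; lra|].
  intros z Hz. destruct (HM z Hz) as [Hlin Hsmall].
  pose proof (eta0_gt z). pose proof (w0_neg z).
  split; [| unfold momentum_density; nra].
  apply (Rmult_le_reg_l kappa); [lra|].
  replace (kappa * ((gamma - / A') / kappa * w0 z)) with (gamma * w0 z - / A' * w0 z)
    by (field; lra).
  rewrite ode.
  assert (eta0 z - eta0inf <= - / A' * w0 z); [| lra].
  apply (Rmult_le_reg_l A'); [lra|].
  replace (A' * (- / A' * w0 z)) with (- w0 z) by (field; lra). lra.
Qed.

Lemma w1_tail_signs :
  exists M, (forall b, M < b -> 0 <= w1 b) /\ (forall a, a < - M -> w1 a <= 0).
Proof.
  destruct tails_w2_le_w0_le_density as (mu & M & Hmu & Htail).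
  assert (Hconc : forall z, M < Rabs z -> w2 z <= 0).
  { intros z Hz. destruct (Htail z Hz) as [Hw2 _]. pose proof (w0_neg z). nra. }
  destruct (w0_lim 1 ltac:(lra)) as [M1 HM1].
  assert (Hbdd : forall z, Rabs M1 < Rabs z -> -1 <= w0 z).
  { intros z Hz. pose proof (Rle_abs M1).
    specialize (HM1 z ltac:(lra)). rewrite Rminus_0_r in HM1.
    apply Rabs_def2 in HM1. lra. }
  pose proof (Rmax_l M 0). pose proof (Rmax_r M 0). pose proof (Rabs_pos M1).
  exists (Rmax M 0). split.
  - apply (concave_bounded_below_deriv_nonneg w0 w1 w2 (Rmax M 0) (-1) (Rabs M1)
             w0_deriv w1_deriv).
    + intros z Hz. apply Hconc. rewrite Rabs_right; lra.
    + intros z Hz. apply Hbdd. rewrite (Rabs_right z); lra.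
  - apply (concave_bounded_below_deriv_nonpos_left w0 w1 w2 (Rmax M 0) (-1) (Rabs M1)
             w0_deriv w1_deriv).
    + intros z Hz. apply Hconc. rewrite Rabs_left; lra.
    + intros z Hz. apply Hbdd. rewrite (Rabs_left z); lra.
Qed.

Lemma tail_estimates :
  exists mu T, 0 < mu /\ 0 < T /\
    (forall b, T <= b -> 0 <= w1 b) /\ (forall a, a <= - T -> w1 a <= 0) /\
    forall x, T <= Rabs x -> / mu * w2 x <= momentum_density eta0inf w0 eta0 x.
Proof.
  destruct tails_w2_le_w0_le_density as (mu & M & Hmu & Htail).
  destruct w1_tail_signs as (M' & Hright & Hleft).
  pose proof (Rmax_l (Rmax M M') 0). pose proof (Rmax_r (Rmax M M') 0).
  pose proof (Rmax_l M M'). pose proof (Rmax_r M M').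
  exists mu, (Rmax (Rmax M M') 0 + 1).
  split; [exact Hmu|]. split; [lra|]. split; [| split].
  - intros b Hb. apply Hright. lra.
  - intros a Ha. apply Hleft. lra.
  - intros x Hx. destruct (Htail x ltac:(lra)) as [Hw2 Hw0].
    apply Rle_trans with (w0 x); [| exact Hw0].
    apply (Rmult_le_reg_l mu); [lra|].
    replace (mu * (/ mu * w2 x)) with (w2 x) by (field; lra). lra.
Qed.

Lemma momentum_RInt_bounded_below :
  exists B, forall a b, a <= b -> B <= RInt (momentum_density eta0inf w0 eta0) a b.
Proof.
  destruct tail_estimates as (mu & T & Hmu & HT & Hright & Hleft & Hdom).
  (* [w1 / mu] is a primitive of a minorant of the density on both tails. *)
  assert (Hderiv : forall x, derivable_pt_lim (fun z => / mu * w1 z) x (/ mu * w2 x))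
    by (intros x; apply derivable_pt_lim_scal, w1_deriv).
  assert (Hcont : forall x, continuity_pt (fun z => / mu * w2 z) x)
    by (intros x; apply continuity_pt_scal, w2_cont).
  assert (Hinv : 0 < / mu) by (apply Rinv_0_lt_compat; lra).
  exists (/ mu * w1 (- T) + RInt (momentum_density eta0inf w0 eta0) (- T) T + - (/ mu * w1 T)).
  apply RInt_nonpos_ge_of_tails; auto using momentum_density_cont.
  - intros x. left. apply momentum_density_neg.
  - intros a Ha.
    assert (0 <= / mu * - w1 a) by (apply Rmult_le_pos; [lra | pose proof (Hleft a Ha); lra]).
    enough (/ mu * w1 (- T) - / mu * w1 a <= RInt (momentum_density eta0inf w0 eta0) a (- T))
      by lra.
    apply (RInt_ge_of_deriv_le _ _ _ a (- T) Ha Hderiv Hcont momentum_density_cont).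
    intros x Hx. apply Hdom. rewrite Rabs_left; lra.
  - intros b Hb.
    assert (0 <= / mu * w1 b) by (apply Rmult_le_pos; [lra | apply Hright, Hb]).
    enough (/ mu * w1 b - / mu * w1 T <= RInt (momentum_density eta0inf w0 eta0) T b)
      by lra.
    apply (RInt_ge_of_deriv_le _ _ _ T b Hb Hderiv Hcont momentum_density_cont).
    intros x Hx. apply Hdom. rewrite Rabs_right; lra.
Qed.

Lemma momentum_integral_neg :
  exists J, is_RInt_line (momentum_density eta0inf w0 eta0) J /\ J < 0.
Proof.
  destruct momentum_RInt_bounded_below as [B HB].
  destruct (is_RInt_line_nonpos_bounded _ momentum_density_cont
              (fun x => Rlt_le _ _ (momentum_density_neg x)) B HB) as (J & HJ & HJle).
  exists J. split; [exact HJ|].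
  apply Rle_lt_trans with (RInt (momentum_density eta0inf w0 eta0) (-1) 1); [apply HJle; lra|].
  apply RInt_neg; [lra | exact momentum_density_cont | exact momentum_density_neg].
Qed.

End SolitonTails.

Lemma derivable_pt_lim_power_law (I : R -> R) (p J s : R) :
  0 < s -> (forall t, 0 < t -> I t = Rpower t p * J) ->
  derivable_pt_lim I s (p * Rpower s (p - 1) * J).
Proof.
  intros Hs HI. apply is_derive_Reals.
  apply (is_derive_ext_loc (fun t => Rpower t p * J)).
  - apply (locally_interval _ s 0 p_infty); [exact Hs | exact Logic.I |].
    intros t Ht _. symmetry. exact (HI t Ht).
  - apply is_derive_Reals, derivable_pt_lim_scal_right, derivable_pt_lim_power, Hs.
Qed.

Lemma smooth_continuity_pt (f : R -> R) : smooth f -> forall z, continuity_pt f z.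
Proof.
  intros (D & HD0 & HD) z. rewrite <- HD0. apply derivable_continuous_pt.
  exact (exist _ (D 1%nat z) (HD 0%nat z)).
Qed.

Lemma saddle_of_eta0inf_lt (beta nu eta0inf : R) :
  0 < nu + 2 -> Rpower eta0inf (nu + 3) < beta ->
  1 < beta / (nu + 2) * ((nu + 2) * Rpower eta0inf (- (nu + 3))).
Proof.
  intros Hnu Hlt. rewrite Rpower_Ropp.
  pose proof (exp_pos ((nu + 3) * ln eta0inf)) as Hpos. fold (Rpower eta0inf (nu + 3)) in Hpos.
  replace (beta / (nu + 2) * ((nu + 2) * / Rpower eta0inf (nu + 3)))
    with (beta / Rpower eta0inf (nu + 3)) by (field; lra).
  apply Rlt_div_r; lra.
Qed.

Lemma soliton_like_momentum_density_cont (nu gamma kappa eta0inf : R) (w0 eta0 : R -> R) :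
  soliton_like nu gamma kappa eta0inf w0 eta0 ->
  forall z, continuity_pt (momentum_density eta0inf w0 eta0) z.
Proof.
  intros (_ & Heta0 & _ & _ & _ & (w1 & _ & Hw1 & _) & _).
  exact (momentum_density_cont eta0inf w0 w1 eta0 Hw1 (smooth_continuity_pt eta0 Heta0)).
Qed.

Lemma soliton_like_momentum_integral (nu gamma kappa eta0inf : R) (w0 eta0 : R -> R) :
  0 < kappa -> 0 < nu + 2 -> 0 < eta0inf ->
  1 < gamma * ((nu + 2) * Rpower eta0inf (- (nu + 3))) ->
  soliton_like nu gamma kappa eta0inf w0 eta0 ->
  exists J, is_RInt_line (momentum_density eta0inf w0 eta0) J /\ J < 0.
Proof.
  intros Hkappa Hnu Heta0inf Hsaddle Hsol.
  destruct Hsol as (_ & Heta0 & _ & _ & Hw0 & (w1 & w2 & Hw1 & Hw2 & Hode)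
                    & Hw0lim & Heta0lim & Hgt).
  apply (momentum_integral_neg nu gamma kappa eta0inf w0 w1 w2 eta0);
    auto using smooth_continuity_pt.
  - intros z. specialize (Hw0 z). lra.
  - intros z. specialize (Hode z). lra.
Qed.

Theorem mainTheorem10
  (beta kappa gamma nu eta0inf : R) (w0 eta0 : R -> R)
  (Hbeta : 0 < beta) (Hkappa : 0 < kappa)
  (Hgamma : gamma = beta / (nu + 2))
  (Hnu : -1 < nu < 1)
  (Heta0inf : 0 < eta0inf)
  (Hrange : beta * (nu + 1) / (2 * (nu + 2)) < Rpower eta0inf (nu + 3) < beta)
  (Hsol : soliton_like nu gamma kappa eta0inf w0 eta0) :
  let etainf := fun s => Rpower s (-2 / (nu + 3)) * eta0inf in
  let ws := fun s z => Rpower s ((nu + 1) / (nu + 3)) * w0 z in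
  let etas := fun s z => Rpower s (-2 / (nu + 3)) * eta0 z in
  exists J : R,
    improper_integral_R (fun z => w0 z * (eta0 z - eta0inf)) J /\
    (forall s, 0 < s -> exists Is,
        improper_integral_R (fun z => ws s z * (etas s z - etainf s)) Is) /\
    (forall I : R -> R,
       (forall s, 0 < s ->
          improper_integral_R (fun z => ws s z * (etas s z - etainf s)) (I s)) ->
       forall s, 0 < s ->
         derivable_pt_lim I s
           (Rpower s (-4 / (nu + 3)) * ((nu - 1) / (nu + 3)) * J) /\
         0 < Rpower s (-4 / (nu + 3)) * ((nu - 1) / (nu + 3)) * J).
Proof.
  intros etainf ws etas.
  (* Only the upper bound in [Hrange] matters here; the lower one is what makes the
     soliton exist, and that existence is assumed through [Hsol]. *)
  assert (Hsaddle := saddle_of_eta0inf_lt beta nu eta0inf ltac:(lra) (proj2 Hrange)).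
  rewrite <- Hgamma in Hsaddle.
  destruct (soliton_like_momentum_integral nu gamma kappa eta0inf w0 eta0
              Hkappa ltac:(lra) Heta0inf Hsaddle Hsol) as (J & HJ & HJneg).
  assert (Hfc := soliton_like_momentum_density_cont nu gamma kappa eta0inf w0 eta0 Hsol).
  set (p := (nu - 1) / (nu + 3)).
  assert (Hscale : forall s, (fun z => ws s z * (etas s z - etainf s))
                             = (fun z => Rpower s p * momentum_density eta0inf w0 eta0 z)).
  { intros s. apply functional_extensionality. intros z.
    unfold ws, etas, etainf, p, momentum_density.
    replace ((nu - 1) / (nu + 3)) with ((nu + 1) / (nu + 3) + -2 / (nu + 3)) by (field; lra).
    rewrite Rpower_plus. ring. }
  exists J. split; [| split].
  - apply is_RInt_line_improper_integral_R; assumption.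
  - intros s Hs. exists (Rpower s p * J). rewrite Hscale.
    apply is_RInt_line_improper_integral_R, is_RInt_line_scal; auto.
    intros x. apply continuity_pt_scal, Hfc.
  - intros I HI s Hs.
    assert (HIs : forall t, 0 < t -> I t = Rpower t p * J).
    { intros t Ht. specialize (HI t Ht). rewrite Hscale in HI.
      apply (is_RInt_line_unique _ _ _ (improper_integral_R_is_RInt_line _ _ HI)).
      apply is_RInt_line_scal; auto. }
    replace (-4 / (nu + 3)) with (p - 1) by (unfold p; field; lra).
    replace (Rpower s (p - 1) * p * J) with (p * Rpower s (p - 1) * J) by ring.
    split; [exact (derivable_pt_lim_power_law I p J s Hs HIs) |].
    assert (Hp : p < 0) by (unfold p, Rdiv; apply Rmult_neg_pos; [lra | apply Rinv_0_lt_compat; lra]).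
    replace (p * Rpower s (p - 1) * J) with (Rpower s (p - 1) * (- p * - J)) by ring.
    apply Rmult_lt_0_compat; [apply exp_pos | apply Rmult_lt_0_compat; lra].
Qed.
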